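(* Let $Q$ be a complete quiver and let $j$ be a mutable vertex which is cycle-preserving for $Q$ and is red or green. Then every vertex that is red or green in $Q$ is red or green in $\mu_j(Q)$. Moreover, for every mutable vertex $k$ that is neither red nor green in $Q$, either the numbers $b_{ku}$ for all frozen $u$ are the same in $Q$ and in $\mu_j(Q)$, or $k$ is red or green in $\mu_j(Q)$.
   Context: A quiver is a finite directed multigraph with no loops and no oriented 2-cycles, whose vertex set is partitioned into mutable and frozen vertices; arrows between two frozen vertices are ignored. $b_{ik}$ = number of arrows $i\to k$ minus number of arrows $k\to i$; $Q|_S$ is the induced subquiver on $S$. Mutation $\mu_j$ at mutable $j$: for each path $i\to j\to k$ add $b_{ij}b_{jk}$ arrows $i\to k$, reverse all arrows at $j$, cancel 2-cycles. Complete: at least one arrow between every pair of vertices at least one of which is mutable. A 3-vertex (sub)quiver is an oriented 3-cycle if it has at most one frozen vertex and its underlying directed graph is not acyclic. A mutable vertex $j$ is cycle-preserving for $Q$ if whenever $Q|_{\{i,j,k\}}$ is an oriented 3-cycle containing $j$, so is $\mu_j(Q)|_{\{i,j,k\}}$. A mutable vertex adjacent to at least one frozen vertex is red (resp. green) if all arrows between it and frozen vertices point towards (resp. away from) it. *)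

(* A quiver on a finite vertex type V with frozen vertices
   [frozen] is encoded by its skew-symmetric exchange matrix
   b i k = #(arrows i -> k) - #(arrows k -> i); since the quiver has no
   loops and no oriented 2-cycles, b determines the quiver (up to the
   ignored frozen-frozen arrows). *)
From mathcomp Require Import all_boot all_order all_algebra.
Set Implicit Arguments. Unset Strict Implicit. Unset Printing Implicit Defensive.
Import Order.TTheory GRing.Theory Num.Theory.
Local Open Scope ring_scope.

Section Quiver.
Variables (V : finType) (frozen : pred V).

Definition exmat := V -> V -> int.

Definition skew_symmetric (b : exmat) : Prop := forall i k, b i k = - b k i.

(* mutation at j: for each path i -> j -> k add b_ij b_jk arrows i -> k
   (and symmetrically for k -> j -> i), reverse arrows at j, cancel 2-cycles *)
Definition mutate (j : V) (b : exmat) : exmat := fun i k =>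
  if (i == j) || (k == j) then - b i k
  else b i k
       + (if (0 < b i j) && (0 < b j k) then b i j * b j k
          else if (b i j < 0) && (b j k < 0) then - (b i j * b j k)
          else 0).

Definition complete (b : exmat) : Prop :=
  forall i k, i != k -> (~~ frozen i || ~~ frozen k) -> b i k != 0.

(* Q|_{i,j,k} is an oriented 3-cycle: three distinct vertices, at most one
   frozen, and the underlying directed graph contains a directed cycle
   (necessarily through all three vertices, as there are no loops or 2-cycles). *)
Definition oriented3cycle (b : exmat) (i j k : V) : Prop :=
  [/\ i != j, j != k & i != k] /\
  ((~~ frozen i && ~~ frozen j) || (~~ frozen j && ~~ frozen k)
     || (~~ frozen i && ~~ frozen k)) /\
  ((0 < b i j /\ 0 < b j k /\ 0 < b k i) \/
   (b i j < 0 /\ b j k < 0 /\ b k i < 0)).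

Definition cycle_preserving (b : exmat) (j : V) : Prop :=
  ~~ frozen j /\
  forall i k, oriented3cycle b i j k -> oriented3cycle (mutate j b) i j k.

Definition red (b : exmat) (k : V) : Prop :=
  ~~ frozen k /\ (exists u, frozen u /\ b k u != 0) /\
  (forall u, frozen u -> b k u <= 0).

Definition green (b : exmat) (k : V) : Prop :=
  ~~ frozen k /\ (exists u, frozen u /\ b k u != 0) /\
  (forall u, frozen u -> 0 <= b k u).

End Quiver.

From mathcomp Require Import all_boot all_order all_algebra.
Import Order.TTheory GRing.Theory Num.Theory.
Set Implicit Arguments. Unset Strict Implicit. Unset Printing Implicit Defensive.
Local Open Scope ring_scope.

(* Reversing all arrows (b |-> -b) commutes with mutation and exchanges red
   and green, so we may assume j green.  Let v <> j be mutable.  If j -> v,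
   there is no path v -> j -> u through a frozen u, so the frozen part of the
   row of v is unchanged.  If v -> j, then v -> u after mutation for every
   frozen u: either v -> u already, and the path v -> j -> u only adds arrows,
   or v -> j -> u -> v is an oriented 3-cycle, and cycle preservation forces
   u -> v to be reversed along with v -> j.  So v becomes green.  Finally j
   itself turns from green to red. *)

Section Mutation.
Variable V : finType.
Implicit Types (b : exmat V) (i j k : V).

Definition opp_exmat b : exmat V := fun i k => - b i k.

Lemma mutate_at j b i k : (i == j) || (k == j) -> mutate j b i k = - b i k.
Proof. by rewrite /mutate => ->. Qed.

Lemma mutate_unchanged j b i k : i != j -> k != j -> b i j * b j k <= 0 ->
  mutate j b i k = b i k.
Proof.
move=> /negbTE ij /negbTE kj le0; rewrite /mutate ij kj /=.
have [/andP[x0 y0]|_] := boolP ((0 < b i j) && (0 < b j k)).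
  by move: le0; rewrite leNgt (mulr_gt0 x0 y0).
have [/andP[x0 y0]|_] := boolP ((b i j < 0) && (b j k < 0)).
  by move: le0; rewrite leNgt (nmulr_rgt0 _ x0) y0.
by rewrite addr0.
Qed.

Lemma mutate_path j b i k : i != j -> k != j -> 0 < b i j -> 0 < b j k ->
  mutate j b i k = b i k + b i j * b j k.
Proof. by move=> /negbTE ij /negbTE kj x0 y0; rewrite /mutate ij kj x0 y0. Qed.

Lemma mutate_opp j b i k : mutate j (opp_exmat b) i k = - mutate j b i k.
Proof.
rewrite /mutate /opp_exmat; case: ifP => _ //.
rewrite !oppr_gt0 !oppr_lt0 mulrNN opprD; congr (_ + _).
have [x0|x0|->] := ltrgtP (b i j) 0; have [y0|y0|->] := ltrgtP (b j k) 0;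
  by rewrite /= ?oppr0 ?ltxx ?andbF ?(lt_gtF x0) ?(lt_gtF y0) ?x0 ?y0 ?opprK.
Qed.

Lemma mutate_skew j b : skew_symmetric b -> skew_symmetric (mutate j b).
Proof.
move=> sb i k; rewrite /mutate orbC; case: ifP => _; first by rewrite sb.
rewrite (sb k i) (sb k j) (sb j i) !oppr_gt0 !oppr_lt0 mulrNN opprD opprK.
congr (_ + _); rewrite mulrC.
have [x0|x0|->] := ltrgtP (b i j) 0; have [y0|y0|->] := ltrgtP (b j k) 0;
  by rewrite /= ?oppr0 ?ltxx ?andbF ?(lt_gtF x0) ?(lt_gtF y0) ?x0 ?y0 ?opprK.
Qed.

Variable frozen : pred V.

Lemma red_flip b c k : (forall u, frozen u -> c k u = - b k u) ->
  red frozen c k <-> green frozen b k.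
Proof.
move=> E; split=> -[mk [[u [fu nz]] sg]]; (split; [done | split]).
- by exists u; rewrite -oppr_eq0 -E.
- by move=> w fw; rewrite -oppr_le0 -E ?sg.
- by exists u; rewrite E ?oppr_eq0.
- by move=> w fw; rewrite E ?oppr_le0 ?sg.
Qed.

Lemma green_flip b c k : (forall u, frozen u -> c k u = - b k u) ->
  green frozen c k <-> red frozen b k.
Proof.
by move=> E; apply: iff_sym; apply: red_flip => u fu; rewrite E ?opprK.
Qed.

Lemma oriented3cycle_flip b c i j k : (forall x y, c x y = - b x y) ->
  oriented3cycle frozen c i j k <-> oriented3cycle frozen b i j k.
Proof.
move=> E; rewrite /oriented3cycle !E !oppr_gt0 !oppr_lt0.
by split=> -[d [m [o|o]]]; do 2!split=> //; tauto.
Qed.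

Lemma complete_opp b : complete frozen b -> complete frozen (opp_exmat b).
Proof. by move=> cb i k ik fik; rewrite oppr_eq0 cb. Qed.

Lemma skew_opp b : skew_symmetric b -> skew_symmetric (opp_exmat b).
Proof. by move=> sb i k; rewrite /opp_exmat sb. Qed.

Lemma cycle_preserving_opp b j :
  cycle_preserving frozen b j -> cycle_preserving frozen (opp_exmat b) j.
Proof.
move=> [mj cp]; split=> // i k.
move=> /(@oriented3cycle_flip b (opp_exmat b) i j k (fun _ _ => erefl)).
by move=> /cp /(oriented3cycle_flip i j k (mutate_opp j b)).
Qed.

Lemma frozen_neq u v : frozen u -> ~~ frozen v -> u != v.
Proof. by move=> fu; apply: contraNneq => <-. Qed.

Definition red_or_green b k := red frozen b k \/ green frozen b k.

Definition same_frozen_row b c k := forall u, frozen u -> c k u = b k u.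

Definition keeps_red_green j b :=
  (forall v, red_or_green b v -> red_or_green (mutate j b) v) /\
  (forall k, ~~ frozen k -> ~ red frozen b k -> ~ green frozen b k ->
     same_frozen_row b (mutate j b) k \/ red_or_green (mutate j b) k).

Lemma red_or_green_flip b c k : (forall u, frozen u -> c k u = - b k u) ->
  red_or_green c k <-> red_or_green b k.
Proof.
move=> E; split.
  by case=> [/(red_flip E)|/(green_flip E)]; [right|left].
by case=> [/(green_flip E)|/(red_flip E)]; [right|left].
Qed.

Lemma red_or_green_same_row b c k :
  same_frozen_row b c k -> red_or_green b k -> red_or_green c k.
Proof.
move=> E [] [mk [[u [fu nz]] sg]]; [left|right]; do 2!split=> //.
- by exists u; rewrite E.
- by move=> w fw; rewrite E ?sg.
- by exists u; rewrite E.
- by move=> w fw; rewrite E ?sg.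
Qed.

Lemma green_of_frozen_pos b k u0 : ~~ frozen k -> frozen u0 ->
  (forall u, frozen u -> 0 < b k u) -> green frozen b k.
Proof.
move=> mk fu0 pos; do 2!split=> //; last by move=> u /pos /ltW.
by exists u0; rewrite gt_eqF ?pos.
Qed.

Section GreenMutation.
Variables (b : exmat V) (j : V).
Hypotheses (sb : skew_symmetric b) (cb : complete frozen b)
  (cpj : cycle_preserving frozen b j) (gj : green frozen b j).

Lemma green_frozen_pos u : frozen u -> 0 < b j u.
Proof.
move=> fu; rewrite lt_neqAle gj.2.2 // andbT eq_sym.
by apply: cb; rewrite ?cpj.1 // eq_sym frozen_neq ?cpj.1.
Qed.

Lemma mutate_green_frozen_pos v u : ~~ frozen v -> v != j -> frozen u ->
  0 < b v j -> 0 < mutate j b v u.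
Proof.
move=> mv vj fu vj_pos; have mj := cpj.1.
have uj := frozen_neq fu mj; have uv := frozen_neq fu mv.
have ju_pos := green_frozen_pos fu.
have : b v u != 0 by apply: cb; rewrite 1?eq_sym ?mv.
rewrite neq_lt => /orP[vu_neg|vu_pos]; last first.
  by rewrite mutate_path // addr_gt0 // mulr_gt0.
have cyc : oriented3cycle frozen b v j u.
  split; first by split; rewrite // eq_sym.
  by split; [rewrite mv mj | left; rewrite (sb u v) oppr_gt0].
have [_ [_ [[+ _]|[_ [_ uv_neg]]]]] := cpj.2 v u cyc.
  by rewrite mutate_at ?eqxx ?orbT // oppr_gt0 ltNge ltW.
by rewrite (mutate_skew j sb) oppr_gt0.
Qed.

Lemma mutate_green_frozen_row v : ~~ frozen v -> v != j ->
  same_frozen_row b (mutate j b) v \/ green frozen (mutate j b) v.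
Proof.
move=> mv vj; have [u0 [fu0 _]] := gj.2.1.
have : b v j != 0 by apply: cb; rewrite ?mv.
rewrite neq_lt => /orP[vj_neg|vj_pos]; [left|right] => [u fu|].
  apply: mutate_unchanged; rewrite ?(frozen_neq fu cpj.1) //.
  by rewrite nmulr_rle0 // ltW // green_frozen_pos.
apply: (green_of_frozen_pos mv fu0) => u fu.
exact: mutate_green_frozen_pos.
Qed.

Lemma mutate_green_keeps_red_green : keeps_red_green j b.
Proof.
have flip_j u : frozen u -> mutate j b j u = - b j u.
  by move=> _; rewrite mutate_at ?eqxx.
split=> [v rgv | k mk nr ng].
  have mv : ~~ frozen v by case: rgv => -[].
  have [->|vj] := eqVneq v j; first by left; apply/(red_flip flip_j).
  case: (mutate_green_frozen_row mv vj) => [E|]; last by right.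
  exact: red_or_green_same_row rgv.
have kj : k != j by apply: contra_not_neq ng => ->.
by case: (mutate_green_frozen_row mk kj) => [|]; [left | right; right].
Qed.

End GreenMutation.

Lemma keeps_red_green_opp b j :
  keeps_red_green j (opp_exmat b) -> keeps_red_green j b.
Proof.
move=> [keep keep'].
have flip_b v u : frozen u -> opp_exmat b v u = - b v u by [].
have flip_mut v u : frozen u -> mutate j (opp_exmat b) v u = - mutate j b v u.
  by move=> _; apply: mutate_opp.
split=> [v /(red_or_green_flip (flip_b v)) /keep | k mk nr ng].
  by move/(red_or_green_flip (flip_mut v)).
have nr' : ~ red frozen (opp_exmat b) k by move/(red_flip (flip_b k)).
have ng' : ~ green frozen (opp_exmat b) k by move/(green_flip (flip_b k)).
case: (keep' k mk nr' ng') => [E|/(red_or_green_flip (flip_mut k))]; last by right.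
by left=> u fu; apply: oppr_inj; rewrite -mutate_opp E.
Qed.

End Mutation.

Theorem mainTheorem5 (V : finType) (frozen : pred V) (b : exmat V) (j : V) :
  skew_symmetric b -> complete frozen b ->
  ~~ frozen j -> cycle_preserving frozen b j ->
  (red frozen b j \/ green frozen b j) ->
  (forall v, red frozen b v \/ green frozen b v ->
     red frozen (mutate j b) v \/ green frozen (mutate j b) v) /\
  (forall k, ~~ frozen k -> ~ red frozen b k -> ~ green frozen b k ->
     (forall u, frozen u -> mutate j b k u = b k u) \/
     (red frozen (mutate j b) k \/ green frozen (mutate j b) k)).
Proof.
move=> sb cb _ cpj [rj|gj]; last exact: mutate_green_keeps_red_green.
apply: keeps_red_green_opp; apply: mutate_green_keeps_red_green.
- exact: skew_opp.
- exact: complete_opp.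
- exact: cycle_preserving_opp.
- by apply/(green_flip (fun u _ => erefl)).
Qed.
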